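(* Let $A,X,U$ be Banach spaces with $U\subseteq X$, let $\mathcal{A}$ and $\mathcal{M}_k$ ($k\ge1$) be linear operators from $L_1((0,T);A)$ to $L_1((0,T);X)$, let $u_0$ be a $U$-valued generalized random element, and let $f,g_k$ ($k\ge1$) be $X$-valued generalized random processes. Suppose that for every $v_0\in U$ and $\varphi\in L_1((0,T);X)$ the deterministic equation $v(t)=v_0+\int_0^t(\mathcal{A}v)(s)ds+\int_0^t\varphi(s)ds$ has a unique $w(A,X)$ solution $v(t)=V(t,v_0,\varphi)$. Then the equation $du(t)=(\mathcal{A}u(t)+f(t))dt+(\mathcal{M}_ku(t)+g_k(t))dw_k(t)$, $0<t\le T$, $u|_{t=0}=u_0$, has a unique $w(A,X)$ Wiener chaos solution, and its coefficients are given by $$u_\alpha(t)=V(t,u_{0,\alpha},f_\alpha)+\sum_{i,k}\sqrt{\alpha_i^k}\,V(t,0,m_i\mathcal{M}_ku_{\alpha^-(i,k)})+\sum_{i,k}\sqrt{\alpha_i^k}\,V(t,0,m_ig_{k,\alpha^-(i,k)}).$$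
   Context: Independent standard Wiener processes $w_k$, $k\ge1$, on a stochastic basis; $T\in(0,\infty)$ fixed; $\{m_i\}$ an orthonormal basis of $L_2((0,T))$ with $m_i\in L_\infty((0,T))$; $\xi_{ik}=\int_0^Tm_i\,dw_k$; $\mathcal{J}$ the multi-indices $\alpha=(\alpha_i^k)_{i,k\ge1}$ of nonnegative integers with finitely many nonzero entries; $\xi_\alpha=(\prod\alpha_i^k!)^{-1/2}\prod_{i,k}H_{\alpha_i^k}(\xi_{ik})$ (Hermite polynomials $H_n$) is the Cameron–Martin basis; $\alpha^-(i,k)$ equals $\alpha$ except its $(i,k)$ entry is $\max(\alpha_i^k-1,0)$. An $X$-valued generalized random element is a formal series $\sum_\alpha u_\alpha\xi_\alpha$ with $u_\alpha\in X$; an $X$-valued generalized random process is such a series with $u_\alpha\in L_1((0,T);X)$. A $w(A,X)$ solution of the deterministic equation is $v\in L_1((0,T);A)$ for which the equality holds in $L_1((0,T);X)$. An $A$-valued generalized random process $u$ is a $w(A,X)$ Wiener chaos solution of the stochastic equation if, for every $\alpha\in\mathcal{J}$, $u_\alpha\in L_1((0,T);A)$ and, in $L_1((0,T);X)$, $u_\alpha(t)=u_{0,\alpha}+\int_0^t(\mathcal{A}u_\alpha+f_\alpha)(s)ds+\int_0^t\sum_{i,k}\sqrt{\alpha_i^k}\,(\mathcal{M}_ku_{\alpha^-(i,k)}+g_{k,\alpha^-(i,k)})(s)m_i(s)ds$ (this system is the propagator). *)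

From HB Require Import structures.
From mathcomp Require Import all_boot all_order all_algebra.
From mathcomp Require Import all_classical all_reals all_analysis.
Set Implicit Arguments. Unset Strict Implicit. Unset Printing Implicit Defensive.
Import Order.TTheory GRing.Theory Num.Theory.
Import numFieldNormedType.Exports.
Local Open Scope classical_set_scope.
Local Open Scope ring_scope.

Section Bochner.
Context {R : realType}.
Local Notation mu := (@lebesgue_measure R).

Definition ae_on (D : set R) (P : R -> Prop) : Prop :=
  {ae mu, forall t, D t -> P t}.

Context {X : normedModType R}.

Definition simple_on (D : set R) (s : R -> X) : Prop :=
  finite_set (s @` D) /\
  forall x : X, measurable (D `&` s @^-1` [set x] : set (measurableTypeR R)).

Definition simple_integral (D : set R) (s : R -> X) : X :=
  \sum_(x \in s @` D) (fine (mu (D `&` s @^-1` [set x]))) *: x.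

Definition strongly_measurable_on (D : set R) (f : R -> X) : Prop :=
  exists s : nat -> R -> X, (forall n, simple_on D (s n)) /\
    forall t, D t -> s n t @[n --> \oo] --> f t.

Definition L1_on (D : set R) (f : R -> X) : Prop :=
  exists g : R -> X, strongly_measurable_on D g /\
    ae_on D (fun t => f t = g t) /\
    (\int[mu]_(t in D) (`|g t|)%:E < +oo)%E.

Definition bochner_integral (D : set R) (f : R -> X) (x : X) : Prop :=
  L1_on D f /\
  exists (g : R -> X) (s : nat -> R -> X),
    strongly_measurable_on D g /\ ae_on D (fun t => f t = g t) /\
    (forall n, simple_on D (s n)) /\
    (forall n, (\int[mu]_(t in D) (`|s n t|)%:E < +oo)%E) /\
    ((fun n => (\int[mu]_(t in D) (`|s n t - g t|)%:E)%E) @ \oo --> 0%E) /\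
    (simple_integral D (s n) @[n --> \oo] --> x).

End Bochner.

(* Linear operators L_1((0,T);A) -> L_1((0,T);X), acting on           *)
(* representatives and compatible with a.e. equality.                 *)
Definition L1_operator {R : realType} {A X : normedModType R} (T : R)
    (op : (R -> A) -> R -> X) : Prop :=
  [/\ forall v, L1_on `]0, T[ v -> L1_on `]0, T[ (op v),
      forall v w, L1_on `]0, T[ v -> L1_on `]0, T[ w ->
        ae_on `]0, T[ (fun t => v t = w t) ->
        ae_on `]0, T[ (fun t => op v t = op w t) &
      forall (c : R) v w, L1_on `]0, T[ v -> L1_on `]0, T[ w ->
        ae_on `]0, T[ (fun t => op (fun s => c *: v s + w s) t =
                                 c *: op v t + op w t)].

(* Multi-indices  alpha = (alpha_i^k), indices i, k counted from 0.    *)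
Definition mindex := nat -> nat -> nat.

Definition mindex_bound (a : mindex) (N : nat) : Prop :=
  forall i k, (N <= i)%N \/ (N <= k)%N -> a i k = 0%N.

Definition is_mindex (a : mindex) : Prop := exists N, mindex_bound a N.

Definition mminus (a : mindex) (i k : nat) : mindex :=
  fun j l => if (j == i) && (l == k) then (a j l).-1 else a j l.

Section Solutions.
Context {R : realType} {A X U : normedModType R}.
Variables (T : R) (iA : A -> X) (iU : U -> X).

Definition w_solution (opA : (R -> A) -> R -> X) (v0 : U) (phi : R -> X)
    (v : R -> A) : Prop :=
  L1_on `]0, T[ v /\
  ae_on `]0, T[ (fun t => exists I1 I2 : X,
    bochner_integral `]0, t[ (opA v) I1 /\
    bochner_integral `]0, t[ phi I2 /\
    iA (v t) = iU v0 + I1 + I2).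

(* w(A,X) Wiener chaos solution: the propagator holds for every alpha in J;
   the (finite) sum over (i,k) is written over i, k < N for any bound N
   of the support of alpha *)
Definition wc_solution (opA : (R -> A) -> R -> X)
    (opM : nat -> (R -> A) -> R -> X) (m : nat -> R -> R)
    (u0 : mindex -> U) (f : mindex -> R -> X) (g : nat -> mindex -> R -> X)
    (u : mindex -> R -> A) : Prop :=
  forall a, is_mindex a ->
    L1_on `]0, T[ (u a) /\
    forall N, mindex_bound a N ->
      ae_on `]0, T[ (fun t => exists I1 I2 : X,
        bochner_integral `]0, t[ (fun s => opA (u a) s + f a s) I1 /\
        bochner_integral `]0, t[
          (fun s => \sum_(i < N) \sum_(k < N)
             (Num.sqrt (a i k)%:R * m i s) *:
               (opM k (u (mminus a i k)) s + g k (mminus a i k) s)) I2 /\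
        iA (u a t) = iU (u0 a) + I1 + I2).

End Solutions.

From HB Require Import structures.
From mathcomp Require Import all_boot all_order all_algebra.
From mathcomp Require Import all_classical all_reals all_analysis.
From mathcomp Require Import measurable_realfun.
Set Implicit Arguments. Unset Strict Implicit. Unset Printing Implicit Defensive.
Import Order.TTheory GRing.Theory Num.Theory.
Import numFieldNormedType.Exports HBSimple.
Local Open Scope classical_set_scope.
Local Open Scope ring_scope.

(* The propagator is triangular with respect to the order |a| = sum a_i^k of
   the multi-index: the equation for u_a is the deterministic equation with
   initial value u_{0,a} and free term
     F_a(u) = f_a + sum_{i,k} sqrt(a_i^k) m_i (M_k u_{a^-(i,k)} + g_{k,a^-(i,k)}),
   which only involves coefficients of order |a| - 1.  Hence u_a must be
   V(u_{0,a}, F_a(u)); this defines the solution and proves its uniqueness by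
   induction on |a|.  The formula for u_a follows because V(v0, phi) is affine
   in (v0, phi): by uniqueness of deterministic solutions it suffices that
   c V(0, psi) + V(v0, phi) solves the equation with free term c psi + phi,
   which holds by linearity of the operator and of the Bochner integral. *)

Section SimpleIntegral.
Context {R : realType}.
Local Notation mu := (@lebesgue_measure R).
Local Notation MR := (measurableTypeR R).

Lemma fine_measure_bigsetU (I : choiceType) (r : seq I) (P : pred I)
    (G : I -> set MR) (D : set MR) :
  uniq r -> measurable D -> (mu D < +oo)%E ->
  (forall i, measurable (G i)) -> (forall i, G i `<=` D) ->
  (forall i j, i != j -> G i `&` G j = set0) ->
  fine (mu (\big[setU/set0]_(i <- r | P i) G i)) =
  \sum_(i <- r | P i) fine (mu (G i)).
Proof.
move=> + mD fD mG GD dG; elim: r => [|a r IH] /=.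
  by rewrite !big_nil measure0.
move=> /andP[ar ur]; rewrite !big_cons; case: (P a); last exact: IH.
have fin (B : set MR) : measurable B -> B `<=` D -> (mu B < +oo)%E.
  by move=> mB BD; apply: le_lt_trans fD; apply: le_measure; rewrite ?inE.
have mU : measurable (\big[setU/set0]_(i <- r | P i) G i).
  exact: bigsetU_measurable.
have UD : \big[setU/set0]_(i <- r | P i) G i `<=` D.
  by rewrite -bigcup_seq_cond => t [j _ /GD].
have disj : G a `&` \big[setU/set0]_(i <- r | P i) G i = set0.
  rewrite -subset0 => t [Gat]; rewrite -bigcup_seq_cond => -[j /andP[jr _] Gjt].
  have aj : a != j by apply: contraNneq ar => ->.
  by rewrite -(dG a j aj).
rewrite measureU // fineD ?ge0_fin_numE ?fin // IH //.
Qed.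

Lemma simple_on_comp2 {X1 X2 Y : normedModType R} (D : set R) (s1 : R -> X1)
    (s2 : R -> X2) (F : X1 -> X2 -> Y) :
  simple_on D s1 -> simple_on D s2 -> simple_on D (fun t => F (s1 t) (s2 t)).
Proof.
move=> [f1 m1] [f2 m2]; split; first exact: finite_image11.
move=> x.
have -> : D `&` (fun t => F (s1 t) (s2 t)) @^-1` [set x] =
    \bigcup_(p in (s1 @` D `*` s2 @` D) `&` [set p | F p.1 p.2 = x])
      ((D `&` s1 @^-1` [set p.1]) `&` (D `&` s2 @^-1` [set p.2])).
  rewrite eqEsubset; split => t.
    by move=> [Dt /= Fx]; exists (s1 t, s2 t) => //=; split => //; split; exists t.
  by move=> [p /= [_ Fp] [[Dt /= ->] [_ /= ->]]].
apply: fin_bigcup_measurable; first exact/finite_setIl/finite_setX.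
by move=> p _; apply: measurableI.
Qed.

Context {X : normedModType R}.

Lemma simple_on_cst (D : set R) (x : X) : measurable D -> simple_on D (cst x).
Proof.
move=> mD; split.
  by apply: (sub_finite_set (B := [set x])) (finite_set1 x) => _ [t _ <-].
move=> y; have [<-|nxy] := pselect (x = y).
  by rewrite (_ : _ `&` _ = D) // eqEsubset; split => t // [].
by rewrite (_ : _ `&` _ = set0) // -subset0 => t [_ /= xy]; exact: nxy.
Qed.

Lemma simple_integral_seq (D : set R) (s : R -> X) (r : seq X) :
  uniq r -> s @` D `<=` [set` r] ->
  simple_integral D s = \sum_(x <- r) fine (mu (D `&` s @^-1` [set x])) *: x.
Proof.
move=> ur sr; rewrite /simple_integral (fsbig_fwiden r) // => x [_ nx] /=.
suff -> : D `&` s @^-1` [set x] = set0 by rewrite measure0 scale0r.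
by rewrite -subset0 => t [Dt /= stx]; apply: nx; exists t.
Qed.

Lemma simple_integral_comp (P : choiceType) (sg : R -> P) (F : P -> X)
    (lp : seq P) (D : set R) :
  measurable D -> (mu D < +oo)%E -> uniq lp -> sg @` D `<=` [set` lp] ->
  (forall p, measurable (D `&` sg @^-1` [set p])) ->
  simple_integral D (fun t => F (sg t)) =
  \sum_(p <- lp) fine (mu (D `&` sg @^-1` [set p])) *: F p.
Proof.
move=> mD fD ul sl ml.
have sgD t : D t -> sg t \in lp.
  by move=> Dt; exact: (sl _ (ex_intro2 _ _ t Dt erefl)).
rewrite (@simple_integral_seq _ _ (undup (map F lp))) ?undup_uniq //; last first.
  by move=> _ [t Dt <-] /=; rewrite mem_undup map_f ?sgD.
have level x : D `&` (fun t => F (sg t)) @^-1` [set x] =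
    \big[setU/set0]_(p <- lp | F p == x) (D `&` sg @^-1` [set p]).
  rewrite -bigcup_seq_cond eqEsubset; split => t.
    by move=> [Dt /= Fx]; exists (sg t) => //=; rewrite sgD //=; apply/eqP.
  by move=> [p /= /andP[_ /eqP Fp] [Dt /= ->]].
have fine_level x : fine (mu (D `&` (fun t => F (sg t)) @^-1` [set x])) =
    \sum_(p <- lp | F p == x) fine (mu (D `&` sg @^-1` [set p])).
  rewrite level (fine_measure_bigsetU _ ul mD fD ml) => [|p t []//|p q pq] //.
  by rewrite -subset0 => t [[_ /= tp] [_ /= tq]]; move: pq; rewrite -tp -tq eqxx.
under eq_bigr do rewrite fine_level scaler_suml.
rewrite (exchange_big_dep predT) //=; apply: eq_big_seq => p pl.
rewrite -big_filter (eq_filter (a2 := pred1 (F p))) => [|x /=].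
  by rewrite filter_pred1_uniq ?undup_uniq ?mem_undup ?map_f // big_seq1.
by rewrite eq_sym.
Qed.

Lemma simple_integral_comb (D : set R) (s s' : R -> X) (c : R) :
  measurable D -> (mu D < +oo)%E -> simple_on D s -> simple_on D s' ->
  simple_integral D (fun t => c *: s t + s' t) =
  c *: simple_integral D s + simple_integral D s'.
Proof.
move=> mD fD [f1 m1] [f2 m2].
pose sg t := (s t, s' t).
pose lp := finmap.enum_fset (fset_set (s @` D `*` s' @` D)).
have ul : uniq lp by exact: finmap.fset_uniq.
have sl : sg @` D `<=` [set` lp].
  move=> _ [t Dt <-] /=; rewrite /lp in_fset_set; last exact: finite_setX.
  by rewrite inE; split; exists t.
have ml p : measurable (D `&` sg @^-1` [set p]).
  rewrite (_ : _ `&` _ = (D `&` s @^-1` [set p.1]) `&` (D `&` s' @^-1` [set p.2])).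
    exact: measurableI (m1 p.1) (m2 p.2).
  rewrite eqEsubset; split => t; first by move=> [Dt /= <-].
  by move=> [[Dt /= e1] [_ /= e2]]; split => //=; rewrite /sg e1 e2; case: p {e1 e2}.
have simple_integral_sg (F : X * X -> X) := simple_integral_comp F mD fD ul sl ml.
rewrite (simple_integral_sg (fun p => c *: p.1 + p.2)).
rewrite (simple_integral_sg fst) (simple_integral_sg snd) scaler_sumr -big_split.
by apply: eq_bigr => p _; rewrite scalerDr !scalerA mulrC.
Qed.

End SimpleIntegral.

Section AlmostEverywhere.
Context {R : realType}.
Local Notation mu := (@lebesgue_measure R).

Lemma ae_onW (D : set R) (P : R -> Prop) : (forall t, D t -> P t) -> ae_on D P.
Proof. by move=> H; apply: nearW. Qed.

Lemma ae_on_mono2 (D : set R) (P Q S : R -> Prop) :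
  (forall t, D t -> P t -> Q t -> S t) -> ae_on D P -> ae_on D Q -> ae_on D S.
Proof.
move=> H; apply: (filterS2 (ae_filter_ringOfSetsType mu)) => t HP HQ Dt.
exact: H (HP Dt) (HQ Dt).
Qed.

Lemma ae_on_mono (D : set R) (P Q : R -> Prop) :
  (forall t, D t -> P t -> Q t) -> ae_on D P -> ae_on D Q.
Proof. by move=> H HP; apply: ae_on_mono2 HP (HP) => t Dt Pt _; exact: H. Qed.

Lemma ae_on_subset (D D' : set R) (P : R -> Prop) :
  D' `<=` D -> ae_on D P -> ae_on D' P.
Proof.
move=> DD'; apply: (@filterS _ _ (ae_filter_ringOfSetsType mu)) => t HP Dt.
exact/HP/DD'.
Qed.

Lemma ae_on_itv_oo (t T : R) (P : R -> Prop) :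
  t \in `]0, T[ -> ae_on `]0, T[ P -> ae_on `]0, t[ P.
Proof.
rewrite in_itv /= => /andP[_ /ltW tT]; apply: ae_on_subset.
by apply: subset_itvl; rewrite bnd_simp.
Qed.

Lemma ae_on_sum {X : nmodType} (D : set R) (I : Type) (r : seq I)
    (F G : I -> R -> X) :
  (forall i, ae_on D (fun t => F i t = G i t)) ->
  ae_on D (fun t => \sum_(i <- r) F i t = \sum_(i <- r) G i t).
Proof.
move=> H; elim: r => [|a r IH]; first by apply: ae_onW => t _; rewrite !big_nil.
by apply: ae_on_mono2 (H a) IH => t _ e1 e2; rewrite !big_cons e1 e2.
Qed.

End AlmostEverywhere.

Section StrongMeasurability.
Context {R : realType}.
Local Notation MR := (measurableTypeR R).

Lemma measurable_fun_simple_comp {X : normedModType R} (D : set MR)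
    (s : R -> X) (G : X -> R) :
  simple_on D s -> measurable_fun D (fun t => G (s t)).
Proof.
move=> [fs ms] mD B mB.
have -> : D `&` (fun t => G (s t)) @^-1` B =
    \bigcup_(x in s @` D `&` G @^-1` B) (D `&` s @^-1` [set x]).
  rewrite eqEsubset; split => t.
    by move=> [Dt /= GB]; exists (s t) => //; split => //; exists t.
  by move=> [x [_ /= Gx] [Dt /= sx]]; split => //=; rewrite sx.
apply: fin_bigcup_measurable; first exact: finite_setIl.
by move=> x _; exact: ms.
Qed.

Lemma strongly_measurable_norm {X : normedModType R} (D : set MR) (f : R -> X) :
  strongly_measurable_on D f -> measurable_fun D (fun t => `|f t|).
Proof.
move=> [s [ss cs]].
apply: (measurable_fun_cvg (h := fun n t => `|s n t|)).
  by move=> n; exact: measurable_fun_simple_comp.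
by move=> t Dt; apply: cvg_norm; exact: cs.
Qed.

Lemma strongly_measurable_comp2 {X1 X2 Y : normedModType R} (D : set MR)
    (f1 : R -> X1) (f2 : R -> X2) (F : X1 -> X2 -> Y) :
  (forall (u1 : nat -> X1) (u2 : nat -> X2) a1 a2, u1 n @[n --> \oo] --> a1 ->
     u2 n @[n --> \oo] --> a2 -> F (u1 n) (u2 n) @[n --> \oo] --> F a1 a2) ->
  strongly_measurable_on D f1 -> strongly_measurable_on D f2 ->
  strongly_measurable_on D (fun t => F (f1 t) (f2 t)).
Proof.
move=> HF [s1 [ss1 cs1]] [s2 [ss2 cs2]].
exists (fun n t => F (s1 n t) (s2 n t)); split.
  by move=> n; exact: simple_on_comp2.
by move=> t Dt; apply: HF; [exact: cs1|exact: cs2].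
Qed.

Lemma strongly_measurable_scale {X : normedModType R} (D : set MR)
    (m : R -> R) (g : R -> X) :
  measurable D -> measurable_fun D m ->
  strongly_measurable_on D g -> strongly_measurable_on D (fun t => m t *: g t).
Proof.
move=> mD mm; apply: (strongly_measurable_comp2 (X1 := R^o)) => [u1 u2 a1 a2|].
  exact: cvgZ.
have [h hm] := approximation_sfun mD (proj2 (measurable_EFinP D m) mm).
exists (fun n => h n : R -> R); split.
  move=> n; split; first exact: (fimfun_inP (h n) D).
  by move=> x; exact: (measurable_funP1 (h n) x mD).
by move=> t Dt; exact: fine_cvg (hm t Dt).
Qed.

Context {X : normedModType R}.

Lemma simple_strongly_measurable (D : set MR) (s : R -> X) :
  simple_on D s -> strongly_measurable_on D s.
Proof. by move=> ss; exists (fun _ => s); split => // t Dt; exact: cvg_cst. Qed.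

Lemma strongly_measurable_comb (D : set MR) (f g : R -> X) (c : R) :
  strongly_measurable_on D f -> strongly_measurable_on D g ->
  strongly_measurable_on D (fun t => c *: f t + g t).
Proof.
apply: (strongly_measurable_comp2 (F := fun a b => c *: a + b)) => u1 u2 a1 a2 h1 h2.
by apply: cvgD => //; exact: cvgZl_tmp.
Qed.

Lemma strongly_measurable_sub (D : set MR) (f g : R -> X) :
  strongly_measurable_on D f -> strongly_measurable_on D g ->
  strongly_measurable_on D (fun t => f t - g t).
Proof.
apply: (strongly_measurable_comp2 (F := fun a b => a - b)) => u1 u2 a1 a2.
exact: cvgB.
Qed.

End StrongMeasurability.

Section L1.
Context {R : realType}.
Local Notation mu := (@lebesgue_measure R).
Local Notation MR := (measurableTypeR R).

Lemma ge0_le_integral_scaleD (D : set MR) (u v w : R -> R) (k : R) :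
  measurable D ->
  measurable_fun D u -> measurable_fun D v -> measurable_fun D w ->
  (forall t, D t -> 0 <= u t) -> (forall t, D t -> 0 <= v t) ->
  (forall t, D t -> 0 <= w t) -> 0 <= k ->
  (forall t, D t -> u t <= k * v t + w t) ->
  (\int[mu]_(t in D) (u t)%:E <=
     k%:E * \int[mu]_(t in D) (v t)%:E + \int[mu]_(t in D) (w t)%:E)%E.
Proof.
move=> mD mu' mv mw u0 v0 w0 k0 le.
have [mu'E mvE mwE] : [/\ measurable_fun D (fun t => (u t)%:E),
    measurable_fun D (fun t => (v t)%:E) & measurable_fun D (fun t => (w t)%:E)].
  by split; apply/measurable_EFinP.
have mkv : measurable_fun D (fun t => (k * v t)%:E).
  exact/measurable_EFinP/measurable_funM.
have v0' t : D t -> (0 <= (v t)%:E)%E by move=> Dt; rewrite lee_fin v0.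
have w0' t : D t -> (0 <= (w t)%:E)%E by move=> Dt; rewrite lee_fin w0.
have kv0' t : D t -> (0 <= (k * v t)%:E)%E by move=> Dt; rewrite lee_fin mulr_ge0 ?v0.
apply: (@le_trans _ _ (\int[mu]_(t in D) ((k * v t)%:E + (w t)%:E))%E).
  apply: (ge0_le_integral mu mD) mu'E (emeasurable_funD mkv mwE) _ => t Dt.
    by rewrite lee_fin u0.
  by rewrite -EFinD lee_fin le.
rewrite ge0_integralD //; under eq_fun do rewrite EFinM.
by rewrite ge0_integralZl.
Qed.

Context {X : normedModType R}.

Lemma integral_norm_comb_lty (D : set MR) (u v : R -> X) (c : R) :
  measurable D -> strongly_measurable_on D u -> strongly_measurable_on D v ->
  (\int[mu]_(t in D) (`|u t|)%:E < +oo)%E ->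
  (\int[mu]_(t in D) (`|v t|)%:E < +oo)%E ->
  (\int[mu]_(t in D) (`|c *: u t + v t|)%:E < +oo)%E.
Proof.
move=> mD su sv iu iv.
apply: le_lt_trans (ge0_le_integral_scaleD (k := `|c|) mD
   (strongly_measurable_norm (strongly_measurable_comb c su sv))
   (strongly_measurable_norm su) (strongly_measurable_norm sv) _ _ _ _ _) _ => //.
- by move=> t _; rewrite (le_trans (ler_normD _ _)) // normrZ.
- by apply: lte_add_pinfty => //; apply: lte_mul_pinfty.
Qed.

Lemma L1_on_comb (D : set MR) (f h : R -> X) (c : R) : measurable D ->
  L1_on D f -> L1_on D h -> L1_on D (fun t => c *: f t + h t).
Proof.
move=> mD [g1 [s1 [a1 i1]]] [g2 [s2 [a2 i2]]].
exists (fun t => c *: g1 t + g2 t); split; first exact: strongly_measurable_comb.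
split; last exact: integral_norm_comb_lty.
by apply: ae_on_mono2 a1 a2 => t _ -> ->.
Qed.

Lemma L1_on_ae (D : set MR) (f f' : R -> X) :
  L1_on D f -> ae_on D (fun t => f t = f' t) -> L1_on D f'.
Proof.
move=> [g [s [a i]]] e; exists g; split => //; split => //.
by apply: ae_on_mono2 a e => t _ <-.
Qed.

Lemma L1_on0 (D : set MR) : measurable D -> L1_on D (fun _ => 0 : X).
Proof.
move=> mD; exists (fun _ => 0); split.
  exact/simple_strongly_measurable/simple_on_cst.
split; first exact: ae_onW.
by under eq_fun do rewrite normr0; rewrite integral0.
Qed.

Lemma L1_on_add (D : set MR) (f h : R -> X) : measurable D ->
  L1_on D f -> L1_on D h -> L1_on D (fun t => f t + h t).
Proof.
by move=> mD Lf /(L1_on_comb 1 mD Lf); under eq_fun do rewrite scale1r.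
Qed.

Lemma L1_on_scale (D : set MR) (f : R -> X) (c : R) : measurable D ->
  L1_on D f -> L1_on D (fun t => c *: f t).
Proof.
move=> mD Lf; have := L1_on_comb c mD Lf (L1_on0 mD).
by under eq_fun do rewrite addr0.
Qed.

Lemma L1_on_sum (D : set MR) (I : Type) (r : seq I) (phi : I -> R -> X) :
  measurable D -> (forall i, L1_on D (phi i)) ->
  L1_on D (fun t => \sum_(i <- r) phi i t).
Proof.
move=> mD H; elim: r => [|a r IH].
  by under eq_fun do rewrite big_nil; exact: L1_on0.
by under eq_fun do rewrite big_cons; exact: L1_on_add.
Qed.

Lemma L1_on_scale_bounded (D : set MR) (m : R -> R) (g : R -> X) :
  measurable D -> measurable_fun D m ->
  (exists C : R, ae_on D (fun t => `|m t| <= C)) ->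
  L1_on D g -> L1_on D (fun t => m t *: g t).
Proof.
move=> mD mm [C hC] [g1 [s1 [a1 i1]]].
exists (fun t => m t *: g1 t); split; first exact: strongly_measurable_scale.
split; first by apply: ae_on_mono a1 => t _ ->.
pose C' := Num.max C 0.
have C'0 : 0 <= C' by rewrite le_max lexx orbT.
have mmg1 : measurable_fun D (fun t => (`|m t *: g1 t|)%:E).
  apply/measurable_EFinP.
  exact: strongly_measurable_norm (strongly_measurable_scale mD mm s1).
have mC1 : measurable_fun D (fun t => (C' * `|g1 t|)%:E).
  by apply/measurable_EFinP/measurable_funM => //; exact: strongly_measurable_norm.
apply: le_lt_trans (ae_ge0_le_integral mD _ mmg1 _ mC1 _) _.
- by move=> t _; rewrite lee_fin.
- by move=> t _; rewrite lee_fin mulr_ge0.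
- apply: ae_on_mono hC => t _ mC; rewrite lee_fin normrZ ler_wpM2r //.
  by rewrite (le_trans mC) // le_max lexx.
- under eq_fun do rewrite EFinM.
  rewrite ge0_integralZl //; first by apply: lte_mul_pinfty; rewrite ?lee_fin.
  by apply/measurable_EFinP; exact: strongly_measurable_norm s1.
Qed.

End L1.

Section Bochner.
Context {R : realType} {X : normedModType R}.
Local Notation mu := (@lebesgue_measure R).
Local Notation MR := (measurableTypeR R).

Lemma bochner_integral_ae (D : set MR) (f f' : R -> X) (x : X) :
  bochner_integral D f x -> ae_on D (fun t => f t = f' t) ->
  bochner_integral D f' x.
Proof.
move=> [L [g [s [sg [ag rest]]]]] e; split; first exact: L1_on_ae e.
exists g, s; split => //; split => //.
by apply: ae_on_mono2 ag e => t _ <-.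
Qed.

Lemma bochner_integral_comb (D : set MR) (f h : R -> X) (x y : X) (c : R) :
  measurable D -> (mu D < +oo)%E ->
  bochner_integral D f x -> bochner_integral D h y ->
  bochner_integral D (fun t => c *: f t + h t) (c *: x + y).
Proof.
move=> mD fD [Lf [g1 [s1 [sg1 [ag1 [ss1 [is1 [cv1 l1]]]]]]]].
move=> [Lh [g2 [s2 [sg2 [ag2 [ss2 [is2 [cv2 l2]]]]]]]].
have ss1' n := simple_strongly_measurable (ss1 n).
have ss2' n := simple_strongly_measurable (ss2 n).
split; first exact: L1_on_comb.
exists (fun t => c *: g1 t + g2 t), (fun n t => c *: s1 n t + s2 n t).
split; first exact: strongly_measurable_comb.
split; first by apply: ae_on_mono2 ag1 ag2 => t _ -> ->.
split; first by move=> n; exact: (simple_on_comp2 (fun a b => c *: a + b)).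
split; first by move=> n; exact: integral_norm_comb_lty.
split; last first.
  under eq_fun do rewrite simple_integral_comb //.
  by apply: cvgD => //; exact: cvgZl_tmp.
apply: (squeeze_cvge (f := cst 0%E)
  (h := fun n => `|c|%:E * \int[mu]_(t in D) (`|s1 n t - g1 t|)%:E +
                 \int[mu]_(t in D) (`|s2 n t - g2 t|)%:E)%E); last 2 first.
- exact: cvg_cst.
- rewrite -[X in _ --> X]adde0 -[X in (X + _)%E](mule0 `|c|%:E).
  by apply: cvgeD => //; apply: cvgeZl.
apply: nearW => n; apply/andP; split; first by apply: integral_ge0.
have mdiff (u v : R -> X) : strongly_measurable_on D u ->
    strongly_measurable_on D v -> measurable_fun D (fun t => `|u t - v t|).
  by move=> su sv; exact: strongly_measurable_norm (strongly_measurable_sub su sv).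
apply: ge0_le_integral_scaleD (mdiff _ _ (ss1' n) sg1) (mdiff _ _ (ss2' n) sg2)
  _ _ _ _ _ => //.
- by apply: mdiff; exact: strongly_measurable_comb.
- move=> t _; rewrite opprD addrACA -scalerBr.
  by rewrite (le_trans (ler_normD _ _)) // normrZ.
Qed.

Lemma bochner_integralD (D : set MR) (f h : R -> X) (x y : X) :
  measurable D -> (mu D < +oo)%E ->
  bochner_integral D f x -> bochner_integral D h y ->
  bochner_integral D (fun t => f t + h t) (x + y).
Proof.
move=> mD fD bf bh; rewrite -[x]scale1r.
apply: bochner_integral_ae (bochner_integral_comb 1 mD fD bf bh) _.
by apply: ae_onW => t _; rewrite scale1r.
Qed.

Lemma bochner_integralB (D : set MR) (f h : R -> X) (x y : X) :
  measurable D -> (mu D < +oo)%E ->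
  bochner_integral D f x -> bochner_integral D h y ->
  bochner_integral D (fun t => f t - h t) (x - y).
Proof.
move=> mD fD bf bh; rewrite addrC -scaleN1r.
apply: bochner_integral_ae (bochner_integral_comb (-1) mD fD bh bf) _.
by apply: ae_onW => t _; rewrite scaleN1r addrC.
Qed.

Lemma bochner_integral_regroup (D : set MR) (p q r : R -> X) (x0 y J : X) :
  measurable D -> (mu D < +oo)%E -> bochner_integral D q J ->
  (exists I1 I2 : X, bochner_integral D (fun s => p s + q s) I1 /\
     bochner_integral D r I2 /\ y = x0 + I1 + I2) <->
  (exists I1 I2 : X, bochner_integral D p I1 /\
     bochner_integral D (fun s => q s + r s) I2 /\ y = x0 + I1 + I2).
Proof.
move=> mD fD bq; split=> -[I1 [I2 [b1 [b2 ->]]]].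
- exists (I1 - J), (J + I2); split; last split.
  + apply: bochner_integral_ae (bochner_integralB mD fD b1 bq) _.
    by apply: ae_onW => s _; rewrite addrK.
  + exact: bochner_integralD.
  + by rewrite !addrA addrNK.
- exists (I1 + J), (I2 - J); split; last split.
  + exact: bochner_integralD.
  + apply: bochner_integral_ae (bochner_integralB mD fD b2 bq) _.
    by apply: ae_onW => s _; rewrite addrC addKr.
  + by rewrite !addrA [RHS]addrAC addrK.
Qed.

End Bochner.

Lemma lebesgue_measure_itv0_lty {R : realType} (t : R) :
  (@lebesgue_measure R `]0%R, t[ < +oo)%E.
Proof. by rewrite lebesgue_measure_itv /=; case: ifP => // _; rewrite ltry. Qed.

Section SolutionOperator.
Context {R : realType} {A X U : normedModType R}.
Variables (T : R) (iA : {linear A -> X}) (iU : {linear U -> X}).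
Variables (opA : (R -> A) -> R -> X) (V : U -> (R -> X) -> R -> A).
Hypothesis opA_lin : L1_operator T opA.
Hypothesis V_sol : forall v0 phi, L1_on `]0, T[ phi ->
  w_solution T iA iU opA v0 phi (V v0 phi).
Hypothesis V_uniq : forall v0 phi v, L1_on `]0, T[ phi ->
  w_solution T iA iU opA v0 phi v -> ae_on `]0, T[ (fun t => v t = V v0 phi t).

Lemma V_scaleD (c : R) v0 (psi phi : R -> X) :
  L1_on `]0, T[ psi -> L1_on `]0, T[ phi ->
  ae_on `]0, T[ (fun t => V v0 (fun s => c *: psi s + phi s) t =
                          c *: V 0 psi t + V v0 phi t).
Proof.
move=> Lpsi Lphi.
have Lcomb : L1_on `]0, T[ (fun s => c *: psi s + phi s) by exact: L1_on_comb.
suff W : w_solution T iA iU opA v0 (fun s => c *: psi s + phi s)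
    (fun t => c *: V 0 psi t + V v0 phi t).
  by apply: ae_on_mono (V_uniq Lcomb W) => t _ ->.
have [L1 S1] := V_sol 0 Lpsi.
have [L2 S2] := V_sol v0 Lphi.
have [_ _ opA_comb] := opA_lin.
split; first exact: L1_on_comb.
apply: ae_on_mono2 S1 S2 => t Tt [I1 [I2 [b1 [b2 e1]]]] [J1 [J2 [d1 [d2 e2]]]].
have [mt ft] := (measurable_itv `]0, t[, lebesgue_measure_itv0_lty t).
exists (c *: I1 + J1), (c *: I2 + J2); split; last split.
- apply: bochner_integral_ae (bochner_integral_comb c mt ft b1 d1) _.
  by apply: ae_on_itv_oo Tt _; apply: ae_on_mono (opA_comb c _ _ L1 L2) => s _ ->.
- exact: bochner_integral_comb.
- rewrite linearD linearZ /= e1 e2 linear0 add0r scalerDr.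
  by rewrite addrACA; congr (_ + _); exact: addrCA.
Qed.

Lemma V_sumD v0 (phi0 : R -> X) (I : Type) (r : seq I) (c : I -> R)
    (phi : I -> R -> X) :
  L1_on `]0, T[ phi0 -> (forall i, L1_on `]0, T[ (phi i)) ->
  ae_on `]0, T[ (fun t => V v0 (fun s => phi0 s + \sum_(i <- r) c i *: phi i s) t =
                          V v0 phi0 t + \sum_(i <- r) c i *: V 0 (phi i) t).
Proof.
move=> L0 Lphi; elim: r => [|a r IH].
  have -> : (fun s => phi0 s + \sum_(i <- [::]) c i *: phi i s) = phi0.
    by apply: funext => s; rewrite big_nil addr0.
  by apply: ae_onW => t _; rewrite big_nil addr0.
have Lr : L1_on `]0, T[ (fun s => phi0 s + \sum_(i <- r) c i *: phi i s).
  by apply: L1_on_add => //; apply: L1_on_sum => // i; exact: L1_on_scale.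
have -> : (fun s => phi0 s + \sum_(i <- a :: r) c i *: phi i s) =
    (fun s => c a *: phi a s + (phi0 s + \sum_(i <- r) c i *: phi i s)).
  by apply: funext => s; rewrite big_cons addrCA.
apply: ae_on_mono2 (V_scaleD (c a) v0 (Lphi a) Lr) IH => t _ -> ->.
by rewrite big_cons addrCA.
Qed.

Lemma V_eq_ae v0 (phi phi' : R -> X) :
  L1_on `]0, T[ phi -> L1_on `]0, T[ phi' ->
  ae_on `]0, T[ (fun s => phi s = phi' s) ->
  ae_on `]0, T[ (fun t => V v0 phi t = V v0 phi' t).
Proof.
move=> L L' e; apply: V_uniq => //.
have [LV SV] := V_sol v0 L; split => //.
apply: ae_on_mono SV => t Tt [I1 [I2 [b1 [b2 e1]]]].
exists I1, I2; split => //; split => //.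
by apply: bochner_integral_ae b2 _; exact: ae_on_itv_oo Tt e.
Qed.

End SolutionOperator.

Lemma big_ord_widen_idx (R : Type) (idx : R) (op : Monoid.com_law idx) n m
    (G : nat -> R) :
  (n <= m)%N -> (forall i, (n <= i)%N -> G i = idx) ->
  \big[op/idx]_(i < n) G i = \big[op/idx]_(i < m) G i.
Proof.
move=> nm G0; rewrite (big_ord_widen m G nm) big_mkcond; apply: eq_bigr => i _.
by case: ifPn => // /negbTE; rewrite ltnNge => /negbFE /G0 ->.
Qed.

Lemma big_mindex_bound (R : Type) (idx : R) (op : Monoid.com_law idx)
    (a : mindex) N N' (F : nat -> nat -> R) :
  mindex_bound a N -> mindex_bound a N' ->
  (forall i k, a i k = 0%N -> F i k = idx) ->
  \big[op/idx]_(i < N) \big[op/idx]_(k < N) F i k =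
  \big[op/idx]_(i < N') \big[op/idx]_(k < N') F i k.
Proof.
move=> bN bN' F0.
suff widen M : mindex_bound a M -> forall M', (M <= M')%N ->
    \big[op/idx]_(i < M) \big[op/idx]_(k < M) F i k =
    \big[op/idx]_(i < M') \big[op/idx]_(k < M') F i k.
  by rewrite (widen N bN _ (leq_maxl N N')) (widen N' bN' _ (leq_maxr N N')).
move=> bM M' MM'.
transitivity (\big[op/idx]_(i < M) \big[op/idx]_(k < M') F i k).
  by apply: eq_bigr => i _; apply: big_ord_widen_idx => // k Mk; apply/F0/bM; right.
apply: (@big_ord_widen_idx _ _ _ _ _ (fun i => \big[op/idx]_(k < M') F i k)) => //.
by move=> i Mi; rewrite big1 // => k _; apply/F0/bM; left.
Qed.

Definition mbound (a : mindex) : nat := xget 0%N (mindex_bound a).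

Lemma mboundP a : is_mindex a -> mindex_bound a (mbound a).
Proof. by move=> [N bN]; apply: xgetPex; exists N. Qed.

Definition msize (a : mindex) : nat :=
  (\sum_(i < mbound a) \sum_(k < mbound a) a i k)%N.

Lemma msizeE a N : is_mindex a -> mindex_bound a N ->
  msize a = (\sum_(i < N) \sum_(k < N) a i k)%N.
Proof. by move=> ia bN; apply: big_mindex_bound (mboundP ia) bN _. Qed.

Lemma mindex_bound_mminus a i k N :
  mindex_bound a N -> mindex_bound (mminus a i k) N.
Proof. by move=> bN j l jl; rewrite /mminus (bN j l jl); case: ifP. Qed.

Lemma is_mindex_mminus a i k : is_mindex a -> is_mindex (mminus a i k).
Proof. by move=> [N bN]; exists N; exact: mindex_bound_mminus. Qed.

Lemma msize_mminus a i k : is_mindex a -> (0 < a i k)%N ->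
  (msize (mminus a i k) < msize a)%N.
Proof.
move=> [N bN] aik.
have [iN kN] : (i < N)%N /\ (k < N)%N.
  by rewrite !ltnNge; split; apply/negP => Nik; move: aik; rewrite bN //; [left|right].
have ia : is_mindex a by exists N.
rewrite (msizeE (is_mindex_mminus i k ia) (mindex_bound_mminus i k bN)).
rewrite (msizeE ia bN) !pair_bigA /=.
pose ik := (Ordinal iN, Ordinal kN).
rewrite (bigD1 ik) //= [X in (_ < X)%N](bigD1 ik) //=.
rewrite /mminus !eqxx /= (eq_bigr (fun p : 'I_N * 'I_N => a p.1 p.2)).
  by rewrite ltn_add2r ltn_predL.
move=> [j l] /= /eqP jl; case: ifP => // /andP[/eqP ji /eqP lk].
by case: jl; congr pair; apply: val_inj.
Qed.

Lemma mindex_ind (P : mindex -> Prop) :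
  (forall a, is_mindex a ->
     (forall i k, (0 < a i k)%N -> P (mminus a i k)) -> P a) ->
  forall a, is_mindex a -> P a.
Proof.
move=> IH a ia; move: {2}(msize a) (leqnn (msize a)) => n.
elim: n a ia => [|n IHn] a ia sa; apply: IH => // i k aik.
  by have := msize_mminus ia aik; rewrite leqn0 in sa; rewrite (eqP sa).
by apply: IHn; [exact: is_mindex_mminus|exact: leq_trans (msize_mminus ia aik) sa].
Qed.

Section Propagator.
Context {R : realType} {A X U : normedModType R}.
Variables (T : R) (iA : {linear A -> X}) (iU : {linear U -> X}).
Variables (m : nat -> R -> R) (opA : (R -> A) -> R -> X).
Variable opM : nat -> (R -> A) -> R -> X.
Variables (u0 : mindex -> U) (f : mindex -> R -> X) (g : nat -> mindex -> R -> X).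
Variable V : U -> (R -> X) -> R -> A.
Hypothesis m_meas : forall i, measurable_fun `]0, T[ (m i).
Hypothesis m_bdd : forall i, exists C : R, ae_on `]0, T[ (fun t => `|m i t| <= C).
Hypothesis opA_lin : L1_operator T opA.
Hypothesis opM_lin : forall k, L1_operator T (opM k).
Hypothesis f_L1 : forall a, is_mindex a -> L1_on `]0, T[ (f a).
Hypothesis g_L1 : forall k a, is_mindex a -> L1_on `]0, T[ (g k a).
Hypothesis V_sol : forall v0 phi, L1_on `]0, T[ phi ->
  w_solution T iA iU opA v0 phi (V v0 phi).
Hypothesis V_uniq : forall v0 phi v, L1_on `]0, T[ phi ->
  w_solution T iA iU opA v0 phi v -> ae_on `]0, T[ (fun t => v t = V v0 phi t).

Let mT : measurable `]0, T[ := measurable_itv _.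

Definition stochastic_term (a : mindex) (w : mindex -> R -> A) N : R -> X :=
  fun s => \sum_(i < N) \sum_(k < N) (Num.sqrt (a i k)%:R * m i s) *:
    (opM k (w (mminus a i k)) s + g k (mminus a i k) s).

Definition forcing (a : mindex) (w : mindex -> R -> A) : R -> X :=
  fun s => f a s + stochastic_term a w (mbound a) s.

Lemma forcingE a w N : is_mindex a -> mindex_bound a N ->
  forcing a w = fun s => f a s + stochastic_term a w N s.
Proof.
move=> ia bN; apply: funext => s; congr (_ + _).
pose F i k := (Num.sqrt (a i k)%:R * m i s) *:
  (opM k (w (mminus a i k)) s + g k (mminus a i k) s).
apply: (big_mindex_bound (F := F) _ (mboundP ia) bN) => i k aik0.
by rewrite /F aik0 sqrtr0 mul0r scale0r.
Qed.

Lemma eq_forcing a w w' :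
  (forall i k, (0 < a i k)%N -> w (mminus a i k) = w' (mminus a i k)) ->
  forcing a w = forcing a w'.
Proof.
move=> ww'; apply: funext => s; congr (_ + _).
apply: eq_bigr => i _; apply: eq_bigr => k _.
by have [->|/ww' ->] := posnP (a i k); first by rewrite sqrtr0 mul0r !scale0r.
Qed.

Lemma L1_on_forcing a w : is_mindex a ->
  (forall i k, (0 < a i k)%N -> L1_on `]0, T[ (w (mminus a i k))) ->
  L1_on `]0, T[ (forcing a w).
Proof.
move=> ia Lw; apply: L1_on_add mT (f_L1 ia) _.
apply: L1_on_sum => // i; apply: L1_on_sum => // k.
have [aik0|aik] := posnP (a i k).
  apply: L1_on_ae (L1_on0 mT) _; apply: ae_onW => s _.
  by rewrite aik0 sqrtr0 mul0r scale0r.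
have -> : (fun s => (Num.sqrt (a i k)%:R * m i s) *:
    (opM k (w (mminus a i k)) s + g k (mminus a i k) s)) =
  fun s => Num.sqrt (a i k)%:R *:
    (m i s *: (opM k (w (mminus a i k)) s + g k (mminus a i k) s)).
  by apply: funext => s; rewrite scalerA.
apply: L1_on_scale _ mT _; apply: L1_on_scale_bounded mT (m_meas i) (m_bdd i) _.
apply: L1_on_add mT _ (g_L1 k (is_mindex_mminus i k ia)).
by have [opM_L1 _ _] := opM_lin k; exact/opM_L1/Lw.
Qed.

Lemma forcing_eq_ae a w w' :
  (forall i k, (0 < a i k)%N -> L1_on `]0, T[ (w (mminus a i k))) ->
  (forall i k, (0 < a i k)%N -> L1_on `]0, T[ (w' (mminus a i k))) ->
  (forall i k, (0 < a i k)%N ->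
     ae_on `]0, T[ (fun t => w (mminus a i k) t = w' (mminus a i k) t)) ->
  ae_on `]0, T[ (fun s => forcing a w s = forcing a w' s).
Proof.
move=> Lw Lw' ww'.
suff: ae_on `]0, T[ (fun s => stochastic_term a w (mbound a) s =
                             stochastic_term a w' (mbound a) s).
  by apply: ae_on_mono => s _ e; rewrite /forcing e.
apply: ae_on_sum => i; apply: ae_on_sum => k.
have [->|aik] := posnP (a i k).
  by apply: ae_onW => s _; rewrite sqrtr0 mul0r !scale0r.
have [_ opM_ae _] := opM_lin k.
by apply: ae_on_mono (opM_ae _ _ (Lw _ _ aik) (Lw' _ _ aik) (ww' _ _ aik)) => s _ ->.
Qed.

(* [forcing a] only reads multi-indices of smaller size, so [chaos_iter n a]
   no longer changes once [msize a < n]. *)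
Fixpoint chaos_iter (n : nat) : mindex -> R -> A :=
  if n is n'.+1 then fun a => V (u0 a) (forcing a (chaos_iter n'))
  else fun _ _ => 0.

Definition chaos_sol (a : mindex) : R -> A := chaos_iter (msize a).+1 a.

Lemma chaos_iter_stable a : is_mindex a -> forall p, (msize a <= p)%N ->
  chaos_iter p.+1 a = chaos_sol a.
Proof.
move: a; apply: mindex_ind => a ia IH p sp; rewrite /chaos_sol /=.
congr (V _); apply: eq_forcing => i k aik.
have lt := msize_mminus ia aik.
case: p sp => [|p] sp; first by move: lt; rewrite leqn0 in sp; rewrite (eqP sp).
move: lt; case E: (msize a) => [|q] lt //.
by rewrite !IH // -ltnS (leq_trans lt) // -E.
Qed.

Lemma chaos_solE a : is_mindex a -> chaos_sol a = V (u0 a) (forcing a chaos_sol).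
Proof.
move=> ia; rewrite {1}/chaos_sol /=; congr (V _); apply: eq_forcing => i k aik.
move: (msize_mminus ia aik); case: (msize a) => [|q] lt //.
by rewrite chaos_iter_stable //; exact: is_mindex_mminus.
Qed.

Lemma L1_on_chaos_sol a : is_mindex a -> L1_on `]0, T[ (chaos_sol a).
Proof.
move: a; apply: mindex_ind => a ia IH; rewrite chaos_solE //.
by have [] := V_sol (u0 a) (L1_on_forcing ia IH).
Qed.

(* The integral of [f a] needed to move it into the forcing term is provided
   by the deterministic solution with free term [f a]. *)
Lemma propagator_eq_iff a w N : is_mindex a -> mindex_bound a N ->
  ae_on `]0, T[ (fun t => exists I1 I2 : X,
    bochner_integral `]0, t[ (fun s => opA (w a) s + f a s) I1 /\
    bochner_integral `]0, t[ (stochastic_term a w N) I2 /\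
    iA (w a t) = iU (u0 a) + I1 + I2) <->
  ae_on `]0, T[ (fun t => exists I1 I2 : X,
    bochner_integral `]0, t[ (opA (w a)) I1 /\
    bochner_integral `]0, t[ (forcing a w) I2 /\
    iA (w a t) = iU (u0 a) + I1 + I2).
Proof.
move=> ia bN; rewrite (forcingE w ia bN).
have [_ Sf] := V_sol 0 (f_L1 ia).
have regroup t := bochner_integral_regroup (opA (w a)) _ (iU (u0 a)) (iA (w a t))
  (measurable_itv `]0, t[) (lebesgue_measure_itv0_lty t).
by split; apply: ae_on_mono2 Sf => t _ [_ [J [_ [bJ _]]]] /(regroup _ _ _ _ bJ).
Qed.

Lemma wc_solutionP w : wc_solution T iA iU opA opM m u0 f g w <->
  forall a, is_mindex a -> w_solution T iA iU opA (u0 a) (forcing a w) (w a).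
Proof.
split => hw a ia; have [Lw Sw] := hw a ia; split => //.
  exact/(propagator_eq_iff w ia (mboundP ia))/Sw/mboundP.
by move=> N bN; apply/(propagator_eq_iff w ia bN).
Qed.

Lemma chaos_sol_wc : wc_solution T iA iU opA opM m u0 f g chaos_sol.
Proof.
apply/wc_solutionP => a ia; rewrite [chaos_sol a]chaos_solE //.
by apply/V_sol/L1_on_forcing => // i k _; exact/L1_on_chaos_sol/is_mindex_mminus.
Qed.

Lemma wc_solution_L1_mminus w : wc_solution T iA iU opA opM m u0 f g w ->
  forall a i k, is_mindex a -> L1_on `]0, T[ (w (mminus a i k)).
Proof. by move=> hw a i k /(is_mindex_mminus i k) /hw []. Qed.

Lemma wc_solution_V w : wc_solution T iA iU opA opM m u0 f g w ->
  forall a, is_mindex a ->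
  ae_on `]0, T[ (fun t => w a t = V (u0 a) (forcing a w) t).
Proof.
move=> hw a ia; apply: V_uniq; last exact: (proj1 (wc_solutionP w) hw).
by apply: L1_on_forcing => // i k _; exact: wc_solution_L1_mminus.
Qed.

Lemma wc_solution_unique u u' :
  wc_solution T iA iU opA opM m u0 f g u ->
  wc_solution T iA iU opA opM m u0 f g u' ->
  forall a, is_mindex a -> ae_on `]0, T[ (fun t => u a t = u' a t).
Proof.
move=> hu hu'; apply: mindex_ind => a ia IH.
have L1_forcing w : wc_solution T iA iU opA opM m u0 f g w ->
    L1_on `]0, T[ (forcing a w).
  by move=> hw; apply: L1_on_forcing => // i k _; exact: wc_solution_L1_mminus.
have eq_forcing_ae : ae_on `]0, T[ (fun s => forcing a u s = forcing a u' s).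
  by apply: forcing_eq_ae IH => i k _; exact: wc_solution_L1_mminus.
have eqV := V_eq_ae V_sol V_uniq (u0 a) (L1_forcing u hu) (L1_forcing u' hu')
  eq_forcing_ae.
have eq_u : ae_on `]0, T[ (fun t => u a t = V (u0 a) (forcing a u') t).
  by apply: ae_on_mono2 (wc_solution_V hu ia) eqV => t _ ->.
by apply: ae_on_mono2 eq_u (wc_solution_V hu' ia) => t _ -> ->.
Qed.

Lemma chaos_sol_formula a N : is_mindex a -> mindex_bound a N ->
  ae_on `]0, T[ (fun t =>
    chaos_sol a t = V (u0 a) (f a) t
      + \sum_(i < N) \sum_(k < N) Num.sqrt (a i k)%:R *:
          V 0 (fun s => m i s *: opM k (chaos_sol (mminus a i k)) s) t
      + \sum_(i < N) \sum_(k < N) Num.sqrt (a i k)%:R *: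
          V 0 (fun s => m i s *: g k (mminus a i k) s) t).
Proof.
move=> ia bN.
pose c (p : 'I_N * 'I_N) : R := Num.sqrt (a p.1 p.2)%:R.
pose O (p : 'I_N * 'I_N) s := m p.1 s *: opM p.2 (chaos_sol (mminus a p.1 p.2)) s.
pose G (p : 'I_N * 'I_N) s := m p.1 s *: g p.2 (mminus a p.1 p.2) s.
have LO p : L1_on `]0, T[ (O p).
  apply: L1_on_scale_bounded mT (m_meas _) (m_bdd _) _.
  by have [opM_L1 _ _] := opM_lin p.2; exact/opM_L1/L1_on_chaos_sol/is_mindex_mminus.
have LG p : L1_on `]0, T[ (G p).
  exact/(L1_on_scale_bounded mT (m_meas _) (m_bdd _))/g_L1/is_mindex_mminus.
have LfO : L1_on `]0, T[ (fun s => f a s + \sum_p c p *: O p s).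
  by apply: L1_on_add mT (f_L1 ia) _; apply: L1_on_sum => // p; exact: L1_on_scale.
have E : forcing a chaos_sol = fun s =>
    (f a s + \sum_p c p *: O p s) +
    \sum_p c p *: G p s.
  rewrite (forcingE _ ia bN); apply: funext => s; rewrite -addrA; congr (_ + _).
  rewrite /stochastic_term pair_bigA -big_split /=; apply: eq_bigr => p _.
  by rewrite /c /O /G scalerDr !scalerA.
have VG := V_sumD opA_lin V_sol V_uniq (u0 a) (index_enum _) c LfO LG.
have VO := V_sumD opA_lin V_sol V_uniq (u0 a) (index_enum _) c (f_L1 ia) LO.
rewrite {1}(chaos_solE ia) E; apply: ae_on_mono2 VG VO => t _ -> ->.
by rewrite !pair_bigA.
Qed.

End Propagator.

Unset Implicit Arguments. Set Strict Implicit. Set Printing Implicit Defensive.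

Theorem theorem6p4 (R : realType) (A X U : completeNormedModType R) (T : R)
  (hT : 0 < T)
  (iA : {linear A -> X}) (iA_cont : continuous iA) (iA_inj : injective iA)
  (iU : {linear U -> X}) (iU_cont : continuous iU) (iU_inj : injective iU)
  (m : nat -> R -> R)
  (m_meas : forall i, measurable_fun `]0, T[ (m i))
  (m_bdd : forall i, exists C : R, ae_on `]0, T[ (fun t => `|m i t| <= C))
  (m_orth : forall i j, (\int[@lebesgue_measure R]_(t in `]0%R, T[) (m i t * m j t)%:E
                         = (if i == j then 1 else 0)%:E)%E)
  (m_total : forall h : R -> R, measurable_fun `]0, T[ h ->
      (\int[@lebesgue_measure R]_(t in `]0%R, T[) (h t ^+ 2)%:E < +oo)%E ->
      (forall i, (\int[@lebesgue_measure R]_(t in `]0%R, T[) (h t * m i t)%:E)%E = 0%E) ->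
      ae_on `]0, T[ (fun t => h t = 0))
  (opA : (R -> A) -> R -> X) (opM : nat -> (R -> A) -> R -> X)
  (opA_lin : L1_operator T opA) (opM_lin : forall k, L1_operator T (opM k))
  (u0 : mindex -> U) (f : mindex -> R -> X) (g : nat -> mindex -> R -> X)
  (f_L1 : forall a, is_mindex a -> L1_on `]0, T[ (f a))
  (g_L1 : forall k a, is_mindex a -> L1_on `]0, T[ (g k a))
  (V : U -> (R -> X) -> R -> A)
  (V_sol : forall v0 phi, L1_on `]0, T[ phi ->
      w_solution T iA iU opA v0 phi (V v0 phi))
  (V_uniq : forall v0 phi v, L1_on `]0, T[ phi ->
      w_solution T iA iU opA v0 phi v ->
      ae_on `]0, T[ (fun t => v t = V v0 phi t)) :
  (exists u : mindex -> R -> A,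
     wc_solution T iA iU opA opM m u0 f g u /\
     forall a, is_mindex a -> forall N, mindex_bound a N ->
       ae_on `]0, T[ (fun t =>
         u a t = V (u0 a) (f a) t
           + \sum_(i < N) \sum_(k < N) Num.sqrt (a i k)%:R *:
               V 0 (fun s => m i s *: opM k (u (mminus a i k)) s) t
           + \sum_(i < N) \sum_(k < N) Num.sqrt (a i k)%:R *:
               V 0 (fun s => m i s *: g k (mminus a i k) s) t)) /\
  (forall u u' : mindex -> R -> A,
     wc_solution T iA iU opA opM m u0 f g u ->
     wc_solution T iA iU opA opM m u0 f g u' ->
     forall a, is_mindex a -> ae_on `]0, T[ (fun t => u a t = u' a t)).
Proof.
split.
  exists (chaos_sol m opM u0 f g V); split.
    exact: (chaos_sol_wc u0 m_meas m_bdd opM_lin f_L1 g_L1 V_sol).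
  move=> a ia N bN.
  exact: (chaos_sol_formula u0 m_meas m_bdd opA_lin opM_lin f_L1 g_L1 V_sol V_uniq ia bN).
exact: wc_solution_unique m_meas m_bdd opM_lin f_L1 g_L1 V_sol V_uniq.
Qed.
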